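(* Let $(J,\mu)$ be a standard Borel space with a Borel measure $\mu$, and let $\mathcal{I}$ be a family of Borel subsets of $J$ satisfying (I1) if $I_1\subseteq I_2\subseteq\cdots$ with $I_n\in\mathcal{I}$ for all $n\in\mathbb{Z}_+$, then $\bigcup_n I_n\in\mathcal{I}$. Then $\mathcal{I}$ satisfies (I2) for all $I_1,I_2\in\mathcal{I}$ with $\mu(I_1)<\mu(I_2)$ there exists $I_3\in\mathcal{I}$ with $I_1\subseteq I_3\subseteq I_1\cup I_2$ and $\mu(I_3)>\mu(I_1)$ if and only if it satisfies (I2') for all $I_1,I_2\in\mathcal{I}$ there exists $I_3\in\mathcal{I}$ with $I_1\subseteq I_3\subseteq I_1\cup I_2$ and $\mu(I_3)\ge\mu(I_2)$. *)

From HB Require Import structures.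
From mathcomp Require Import all_boot all_order all_algebra.
From mathcomp Require Import all_classical all_reals all_analysis.
Set Implicit Arguments. Unset Strict Implicit. Unset Printing Implicit Defensive.
Import Order.TTheory GRing.Theory Num.Theory.
Local Open Scope classical_set_scope.
Local Open Scope ring_scope.

Definition is_metric (R : realType) (T : Type) (dist : T -> T -> R) : Prop :=
  [/\ forall x y, 0 <= dist x y,
      forall x y, dist x y = 0 <-> x = y,
      forall x y, dist x y = dist y x &
      forall x y z, dist x z <= dist x y + dist y z].

Definition dist_open (R : realType) (T : Type) (dist : T -> T -> R)
  (A : set T) : Prop :=
  forall x, A x -> exists2 e : R, 0 < e & forall y, dist x y < e -> A y.

Definition dist_complete (R : realType) (T : Type) (dist : T -> T -> R) : Prop :=
  forall u : nat -> T,
    (forall e : R, 0 < e -> exists N, forall m n, (N <= m)%N -> (N <= n)%N ->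
        dist (u m) (u n) < e) ->
    exists l, forall e : R, 0 < e -> exists N, forall n, (N <= n)%N ->
        dist (u n) l < e.

(* separability: there is a countable dense subset (given as a sequence;
   T is assumed nonempty in that case -- the empty space is handled separately) *)
Definition dist_separable (R : realType) (T : Type) (dist : T -> T -> R) : Prop :=
  (forall x : T, False) \/
  exists s : nat -> T, forall x (e : R), 0 < e -> exists n, dist x (s n) < e.

Definition polish_metric (R : realType) (T : Type) (dist : T -> T -> R) : Prop :=
  [/\ is_metric dist, dist_complete dist & dist_separable dist].

Definition standard_Borel (d : measure_display) (T : measurableType d) : Prop :=
  exists (R : realType) (dist : T -> T -> R),
    polish_metric dist /\ (@measurable d T = <<s dist_open dist >>).

From HB Require Import structures.
From mathcomp Require Import all_boot all_order all_algebra.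
From mathcomp Require Import all_classical all_reals all_analysis.

(* (I2') implies (I2) at once.  Conversely, fix I1, I2 and let S be the family
   of members of calI lying between I1 and I1 `|` I2.  Build greedily an
   increasing chain in S whose (n+1)-th term has measure close to the supremum
   of mu over the supersets in S of the n-th term; by (I1) its union U is in S.
   If mu U < mu I2, then (I2) yields I3 in S containing U with mu I3 > mu U; but
   I3 is a superset of every term of the chain, so the near-maximality of the
   chain forces mu I3 <= mu U. *)

Set Implicit Arguments. Unset Strict Implicit. Unset Printing Implicit Defensive.
Import Order.TTheory GRing.Theory Num.Theory.
Local Open Scope classical_set_scope.
Local Open Scope ereal_scope.

Section ApproxBelow.
Variable R : realType.

(* The cap [n] makes the approximation converge also for [x = +oo]. *)
Definition approx_below (x : \bar R) (n : nat) : \bar R :=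
  Order.min (x - (n.+1%:R^-1)%:E) n%:R%:E.

Lemma approx_below_lt (x : \bar R) n : -oo < x -> approx_below x n < x.
Proof.
case: x => [x| |] // _; rewrite /approx_below gt_min ?ltry ?orbT //.
by rewrite -EFinB lte_fin ltrBlDr ltrDl invr_gt0 ltr0Sn.
Qed.

Lemma le_approx_below (x y : \bar R) n :
  x <= y -> approx_below x n <= approx_below y n.
Proof. by move=> xy; rewrite /approx_below le_min2 // leeB. Qed.

Lemma approx_below_le (x : \bar R) (r : R) :
  (forall n, approx_below x n <= r%:E) -> x <= r%:E.
Proof.
have [N _ rN] := nbhs_infty_gtr r.
case: x => [s| |] le_r; last exact: leNye.
- rewrite lee_fin; apply/ler_addgt0Pr => e e_gt0.
  have [M _ Me] := near_infty_natSinv_lt (PosNum e_gt0).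
  have rn : (r < (maxn N M)%:R)%R := rN _ (leq_maxl _ _).
  have en : ((maxn N M).+1%:R^-1 < e)%R := Me _ (leq_maxr _ _).
  have := le_r (maxn N M); rewrite ge_min lee_fin leNgt lte_fin rn orbF.
  by rewrite lerBlDr => /le_trans; apply; rewrite lerD2l ltW.
- by have := le_r N; rewrite ge_min lee_fin [(_ <= r)%R]leNgt (rN N (leqnn N)) orbF.
Qed.

End ApproxBelow.

Section GreedyChain.
Variables (R : realType) (T : Type) (S : set (set T)) (m : set T -> \bar R).
Hypothesis m_gtNy : forall A, S A -> -oo < m A.

Lemma exists_almost_maximal_superset A (n : nat) : S A ->
  exists B, [/\ S B, A `<=` B &
    forall C, S C -> A `<=` C -> approx_below (m C) n < m B].
Proof.
move=> SA; pose s := ereal_sup [set m C | C in [set C | S C /\ A `<=` C]].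
have ms C : S C -> A `<=` C -> m C <= s.
  by move=> SC AC; apply: ereal_sup_ubound; exists C.
have : approx_below s n < s.
  by apply/approx_below_lt/(lt_le_trans (m_gtNy SA))/ms.
move/ereal_sup_gt => [_ [B [SB AB] <-] sB]; exists B; split=> // C SC AC.
exact: le_lt_trans (le_approx_below n (ms _ SC AC)) sB.
Qed.

Lemma exists_saturated_chain A : S A ->
  exists F : nat -> set T, [/\ forall n, S (F n),
    {homo F : i j / (i <= j)%N >-> i `<=` j} &
    forall C n, S C -> (forall k, F k `<=` C) -> approx_below (m C) n < m (F n.+1)].
Proof.
move=> SA.
have step (p : set T * nat) : exists B, S p.1 -> [/\ S B, p.1 `<=` B &
    forall C, S C -> p.1 `<=` C -> approx_below (m C) p.2 < m B].
  have [/(exists_almost_maximal_superset p.2)[B HB]|] := pselect (S p.1).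
    by exists B.
  by exists p.1.
have [next next_spec] := choice step.
pose F := fix F n := if n is k.+1 then next (F k, k) else A.
have SF n : S (F n) by elim: n => [|n IH] //; have [] := next_spec (F n, n) IH.
have FS n : F n `<=` F n.+1 by have [] := next_spec (F n, n) (SF n).
exists F; split=> // [|C n SC FC].
  by apply: homo_leq FS => [X|Y X Z]; [exact: subset_refl|exact: subset_trans].
by have [_ _] := next_spec (F n, n) (SF n); apply; last exact: FC.
Qed.

End GreedyChain.

Section Exchange.
Variables (R : realType) (T : Type) (m : set T -> \bar R) (calI : set (set T)).
Hypothesis m_gtNy : forall A, calI A -> -oo < m A.
Hypothesis le_m : {in calI &, {homo m : A B / A `<=` B >-> A <= B}}.
Hypothesis calI_nondecreasing_bigcup : forall F : nat -> set T,
  (forall n, calI (F n)) -> {homo F : n k / (n <= k)%N >-> n `<=` k} ->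
  calI (\bigcup_n F n).

Lemma augmentation_exchange :
  (forall I1 I2, calI I1 -> calI I2 -> m I1 < m I2 ->
     exists I3, [/\ calI I3, I1 `<=` I3, I3 `<=` I1 `|` I2 & m I3 > m I1]) ->
  forall I1 I2, calI I1 -> calI I2 ->
     exists I3, [/\ calI I3, I1 `<=` I3, I3 `<=` I1 `|` I2 & m I3 >= m I2].
Proof.
move=> augment I1 I2 cI1 cI2.
pose S := [set A | [/\ calI A, I1 `<=` A & A `<=` I1 `|` I2]].
have SI1 : S I1 by split=> //; exact: subsetUl.
have S_gtNy A : S A -> -oo < m A by case=> /m_gtNy.
have [F [SF F_homo F_sat]] := exists_saturated_chain S_gtNy SI1.
pose U := \bigcup_n F n.
have FU n : F n `<=` U by move=> x Fx; exists n.
have cF n : calI (F n) by case: (SF n).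
have cU : calI U by exact: calI_nondecreasing_bigcup.
have SU : S U.
  split=> //; first by apply: subset_trans (FU 0%N); case: (SF 0%N).
  by move=> x [n _]; case: (SF n) => _ _; apply.
have [le2|lt2] := leP (m I2) (m U); first by exists U; case: SU.
have [I3 [cI3 UI3 I3_sub gt3]] := augment U I2 cU cI2 lt2.
have SI3 : S I3.
  case: SU => _ I1U UI12; split=> //; first exact: subset_trans I1U UI3.
  by move=> x /I3_sub[/UI12|]; [|right].
suff : m I3 <= m U by rewrite leNgt gt3.
have mU_fin : m U \is a fin_num.
  by rewrite fin_numElt (m_gtNy cU) (lt_le_trans lt2 (leey _)).
rewrite -(fineK mU_fin); apply: approx_below_le => n; rewrite fineK //.
apply/ltW/(lt_le_trans (F_sat _ n SI3 (fun k => subset_trans (FU k) UI3))).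
by apply: le_m; rewrite ?inE.
Qed.

End Exchange.

Theorem lemma4p10 (d : measure_display) (J : measurableType d) (R : realType)
  (mu : {measure set J -> \bar R}%R) (calI : set (set J)) :
  standard_Borel J ->
  calI `<=` measurable ->
  (* (I1) *)
  (forall F : nat -> set J, (forall n, calI (F n)) ->
     {homo F : n m / (n <= m)%N >-> n `<=` m} ->
     calI (\bigcup_n F n)) ->
  ((* (I2) *)
   (forall I1 I2, calI I1 -> calI I2 -> mu I1 < mu I2 ->
      exists I3, [/\ calI I3, I1 `<=` I3, I3 `<=` I1 `|` I2 & mu I3 > mu I1])
   <->
   (* (I2') *)
   (forall I1 I2, calI I1 -> calI I2 ->
      exists I3, [/\ calI I3, I1 `<=` I3, I3 `<=` I1 `|` I2 & mu I3 >= mu I2])).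
Proof.
move=> _ calI_meas calI_bigcup; split=> [augment|exchange I1 I2 cI1 cI2 lt12].
  apply: augmentation_exchange => // [A _|A B /set_mem cA /set_mem cB AB].
    exact: lt_le_trans ltNy0 (measure_ge0 mu A).
  by apply: le_measure; rewrite // inE; apply: calI_meas.
have [I3 [cI3 I13 I3_sub le23]] := exchange I1 I2 cI1 cI2.
by exists I3; split=> //; exact: lt_le_trans lt12 le23.
Qed.
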